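(* Let $n\ge1$. For $v,w\in\mathfrak{S}_n$ set $$\lambda(v,w)=\#\{J\subseteq[n-1]:\mathrm{Des}(w^{-1}v_J)\subseteq J,\ \#J\text{ odd}\}-\#\{J\subseteq[n-1]:\mathrm{Des}(w^{-1}v_J)\subseteq J,\ \#J\text{ even}\}.$$ Then the antipode $S$ of $\mathfrak{S}Sym$ satisfies $S(\mathcal{F}_v)=\sum_{w\in\mathfrak{S}_n}\lambda(v,w)\,\mathcal{F}_w$.
   Context: Permutations in one-line notation, product is composition $(uv)(i)=u(v(i))$. $\mathrm{Des}(x)=\{p\in[n-1]:x_p>x_{p+1}\}$. $\mathrm{st}(a_1,\ldots,a_m)\in\mathfrak{S}_m$ is the permutation with the same relative order as the distinct integers $a_i$. For $x\in\mathfrak{S}_a,y\in\mathfrak{S}_b$, $x\times y\in\mathfrak{S}_{a+b}$ has $(x\times y)(i)=x_i$ ($i\le a$), $(x\times y)(a+j)=a+y_j$. For $v\in\mathfrak{S}_n$ and $J=\{p_1<\cdots<p_k\}\subseteq[n-1]$, $v_J=\mathrm{st}(v_1,\ldots,v_{p_1})\times\mathrm{st}(v_{p_1+1},\ldots,v_{p_2})\times\cdots\times\mathrm{st}(v_{p_k+1},\ldots,v_n)$, $v_\emptyset=v$. $\mathfrak{S}Sym$ is the graded connected Hopf algebra over $\mathbb{Q}$ with basis $\{\mathcal{F}_u:u\in\mathfrak{S}_n,n\ge0\}$, product $\mathcal{F}_u\cdot\mathcal{F}_v=\sum_{\zeta}\mathcal{F}_{(u\times v)\cdot\zeta^{-1}}$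 over $\zeta\in\mathfrak{S}_{p+q}$ with $\zeta_1<\cdots<\zeta_p$, $\zeta_{p+1}<\cdots<\zeta_{p+q}$ (for $u\in\mathfrak{S}_p,v\in\mathfrak{S}_q$), and coproduct $\Delta(\mathcal{F}_u)=\sum_{p=0}^n\mathcal{F}_{\mathrm{st}(u_1..u_p)}\otimes\mathcal{F}_{\mathrm{st}(u_{p+1}..u_n)}$. *)

From mathcomp Require Import all_boot all_order all_algebra.
Set Implicit Arguments. Unset Strict Implicit. Unset Printing Implicit Defensive.
Import Order.TTheory GRing.Theory Num.Theory.
Local Open Scope ring_scope.

(* Permutations of [n] = {1..n} in one-line notation, as sequences of nats. *)
Definition is_perm (w : seq nat) : bool := perm_eq w (iota 1 (size w)).
Definition perms (n : nat) : seq (seq nat) := permutations (iota 1 n).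

Definition oneline_comp (u v : seq nat) : seq nat := map (fun i => nth 0%N u i.-1) v.
Definition oneline_inv (w : seq nat) : seq nat :=
  map (fun i => (index i w).+1) (iota 1 (size w)).
Definition st (a : seq nat) : seq nat :=
  map (fun x => (count (fun y => (y < x)%N) a).+1) a.
Definition cross (x y : seq nat) : seq nat := x ++ map (addn (size x)) y.

Definition shuffles (p q : nat) : seq (seq nat) :=
  [seq z <- perms (p + q) | sorted ltn (take p z) && sorted ltn (drop p z)].

(* F_u . F_v = sum of F_x for x in prodF u v (as a multiset) *)
Definition prodF (u v : seq nat) : seq (seq nat) :=
  [seq oneline_comp (cross u v) (oneline_inv z) | z <- shuffles (size u) (size v)].

(* Elements of SSym: coefficient functions on the basis {F_w}. *)
Definition Elt := seq nat -> rat.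
Definition basisF (u : seq nat) : Elt := fun w => (w == u)%:R.

Definition is_SSym_elt (x : Elt) : Prop :=
  (forall w, x w != 0 -> is_perm w) /\
  (exists N, forall w, x w != 0 -> (size w <= N)%N).

(* coefficient of F_w in x . F_v, for x supported on permutations *)
Definition mulrF (x : Elt) (v : seq nat) : Elt := fun w =>
  if (size v <= size w)%N then
    \sum_(u <- perms (size w - size v)) x u * (count_mem w (prodF u v))%:R
  else 0.
(* coefficient of F_w in F_v . x, for x supported on permutations *)
Definition mullF (v : seq nat) (x : Elt) : Elt := fun w =>
  if (size v <= size w)%N then
    \sum_(u <- perms (size w - size v)) x u * (count_mem w (prodF v u))%:R
  else 0.

(* S (given on the basis, extended linearly) is the antipode of SSym:
   m (S (x) id) Delta = eta eps = m (id (x) S) Delta, where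
   Delta F_u = sum_p F_{st(u_1..u_p)} (x) F_{st(u_{p+1}..u_n)},
   eps F_u = [n = 0], eta 1 = F_{empty}. *)
Definition is_antipode (S : seq nat -> Elt) : Prop :=
  (forall u, is_SSym_elt (S u)) /\
  (forall u, is_perm u -> forall w,
     \sum_(p < (size u).+1) mulrF (S (st (take p u))) (st (drop p u)) w
     = (size u == 0%N)%:R * basisF [::] w) /\
  (forall u, is_perm u -> forall w,
     \sum_(p < (size u).+1) mullF (st (take p u)) (S (st (drop p u))) w
     = (size u == 0%N)%:R * basisF [::] w).

(* Des(x) = {p in [n-1] : x_p > x_{p+1}} as a subset of 'I_n (positions 1..n-1) *)
Definition des_sub (n : nat) (x : seq nat) (J : {set 'I_n}) : bool :=
  [forall p : 'I_n, ((0 < p)%N && (nth 0%N x p < nth 0%N x p.-1)%N) ==> (p \in J)].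

(* cut s at the absolute positions ps (increasing), current offset off *)
Fixpoint cuts (s : seq nat) (ps : seq nat) (off : nat) : seq (seq nat) :=
  match ps with
  | [::] => [:: s]
  | p :: ps' => take (p - off) s :: cuts (drop (p - off) s) ps' p
  end.

(* J subset of [n-1] represented as {set 'I_n} with 0 \notin J *)
Definition subJ (n : nat) (J : {set 'I_n}) : bool := [forall i in J, (0 < i)%N].

(* v_J = st(v_1..v_{p1}) x st(..) x ... x st(v_{pk+1}..v_n) *)
Definition vJ (v : seq nat) (J : {set 'I_(size v)}) : seq nat :=
  foldr cross [::] (map st (cuts v (sort leq [seq val i | i <- enum J]) 0)).

Definition goodJ (v w : seq nat) (J : {set 'I_(size v)}) : bool :=
  subJ J && des_sub (oneline_comp (oneline_inv w) (vJ J)) J.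

Definition lambda (v w : seq nat) : int :=
  (#|[set J : {set 'I_(size v)} | goodJ w J & odd #|J|]|%:Z
   - #|[set J : {set 'I_(size v)} | goodJ w J & ~~ odd #|J|]|%:Z)%R.

Example st_ex : st [:: 5; 2; 9] = [:: 2; 1; 3]. Proof. by []. Qed.
Example cross_ex : cross [:: 2; 1] [:: 1] = [:: 2; 1; 3]. Proof. by []. Qed.
Example prod_ex : prodF [:: 1] [:: 1] = [:: [:: 1; 2]; [:: 2; 1]]. Proof. by []. Qed.

From mathcomp Require Import all_boot all_order all_algebra.
From mathcomp Require Import zify.
Import Order.TTheory GRing.Theory Num.Theory.

(* Induction on [n] through the left antipode axiom, which for [n >= 1] reads
   S(F_v) = - sum_(p < n) S(F_(st(v_1..v_p))) . F_(st(v_(p+1)..v_n)).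
   The coefficient of [F_w] in [F_u . F_b] is [Des(w^-1 (u x b)) <= {p}].  Pairing
   this with the induction hypothesis for [a = st(v_1..v_p)], the sum over [u]
   collapses to [Des(w^-1 (a_J x b)) <= J u {p}], and [a_J x b = v_(J u {p})].
   Hence the [p]-th term of the recursion is, up to sign, the part of
   [lambda(v, w)] indexed by the sets [J'] with [max J' = p]; the term [p = 0]
   accounts for [J' = {}]. *)

Set Implicit Arguments. Unset Strict Implicit. Unset Printing Implicit Defensive.

Lemma mem_perms k x : (x \in perms k) = perm_eq x (iota 1 k).
Proof. by rewrite /perms mem_permutations. Qed.

Lemma size_perms k x : x \in perms k -> size x = k.
Proof. by rewrite mem_perms => /perm_size ->; rewrite size_iota. Qed.

Lemma perms_memE k x i : x \in perms k -> (i \in x) = (0 < i <= k).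
Proof. by rewrite mem_perms => /perm_mem ->; rewrite mem_iota; lia. Qed.

Lemma perms_uniq k x : x \in perms k -> uniq x.
Proof. by rewrite mem_perms => /perm_uniq ->; apply: iota_uniq. Qed.

Lemma uniq_perms k : uniq (perms k).
Proof. exact: permutations_uniq. Qed.

Lemma is_permE w : is_perm w = (w \in perms (size w)).
Proof. by rewrite mem_perms. Qed.

Lemma comp_idr k x : size x = k -> oneline_comp x (iota 1 k) = x.
Proof.
move=> <-; rewrite /oneline_comp (iotaDl 1 0) -map_comp.
by rewrite (eq_map (g := nth 0 x)) // -/(mkseq _ _) mkseq_nth.
Qed.

Lemma comp_idl k x : x \in perms k -> oneline_comp (iota 1 k) x = x.
Proof.
move=> hx; rewrite /oneline_comp; apply: map_id_in => i.
rewrite (perms_memE _ hx) => /andP[h1 h2]; rewrite nth_iota; lia.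
Qed.

Lemma compA k x y z : z \in perms k -> size y = k ->
  oneline_comp x (oneline_comp y z) = oneline_comp (oneline_comp x y) z.
Proof.
move=> hz hy; rewrite /oneline_comp -map_comp; apply/eq_in_map => i.
rewrite (perms_memE _ hz) => /andP[h1 h2] /=; rewrite (nth_map 0) //; lia.
Qed.

Lemma map_index_uniq (x : seq nat) : uniq x ->
  map (fun i => (index i x).+1) x = iota 1 (size x).
Proof.
move=> ux; have ex : x = map (nth 0 x) (iota 0 (size x)) by rewrite -/(mkseq _ _) mkseq_nth.
rewrite {2}ex -map_comp (iotaDl 1 0).
by apply/eq_in_map => i; rewrite mem_iota /= => hi; rewrite index_uniq.
Qed.

Lemma inv_perms k x : x \in perms k -> oneline_inv x \in perms k.
Proof.
move=> hx; rewrite /oneline_inv (size_perms hx) mem_perms.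
have := hx; rewrite mem_perms perm_sym => /(perm_map (fun i => (index i x).+1)).
by rewrite map_index_uniq ?(perms_uniq hx) ?(size_perms hx).
Qed.

Lemma comp_invl k x : x \in perms k -> oneline_comp (oneline_inv x) x = iota 1 k.
Proof.
move=> hx; rewrite -(size_perms hx) -map_index_uniq ?(perms_uniq hx) //.
rewrite /oneline_comp; apply/eq_in_map => i.
rewrite (perms_memE _ hx) => /andP[h1 h2]; rewrite /oneline_inv (nth_map 0).
  by rewrite nth_iota ?(size_perms hx); [congr (index _ _).+1; lia | lia].
by rewrite size_iota (size_perms hx); lia.
Qed.

Lemma comp_invr k x : x \in perms k -> oneline_comp x (oneline_inv x) = iota 1 k.
Proof.
move=> hx; rewrite /oneline_comp /oneline_inv -map_comp (size_perms hx).
rewrite map_id_in // => i hi /=.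
by rewrite nth_index // (perms_memE _ hx); move: hi; rewrite mem_iota; lia.
Qed.

Lemma comp_perms k x y : x \in perms k -> y \in perms k -> oneline_comp x y \in perms k.
Proof.
move=> hx hy; rewrite mem_perms; have := hy; rewrite mem_perms.
move=> /(perm_map (fun i => nth 0 x i.-1)) /perm_trans; apply.
by have := comp_idr (size_perms hx); rewrite /oneline_comp => ->; rewrite -mem_perms.
Qed.

Lemma invK k x : x \in perms k -> oneline_inv (oneline_inv x) = x.
Proof.
move=> hx; have hi := inv_perms hx; have hii := inv_perms hi.
rewrite -(comp_idr (size_perms hii)) -(comp_invl hx) (compA _ hx) ?(size_perms hi) //.
by rewrite (comp_invl hi) (comp_idl hx).
Qed.

Lemma comp_eq_id k x y : x \in perms k -> y \in perms k ->
  (oneline_comp x y == iota 1 k) = (y == oneline_inv x).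
Proof.
move=> hx hy; apply/eqP/eqP => [h|->]; last exact: comp_invr.
rewrite -(comp_idl hy) -(comp_invl hx) -(compA _ hy) ?h ?(size_perms hx) //.
by rewrite comp_idr // (size_perms (inv_perms hx)).
Qed.

Lemma comp_inv_eq k x z w : x \in perms k -> z \in perms k -> w \in perms k ->
  (oneline_comp x (oneline_inv z) == w) = (z == oneline_comp (oneline_inv w) x).
Proof.
move=> hx hz hw; have hzi := inv_perms hz; have hwi := inv_perms hw.
have sx := size_perms hx; have sw := size_perms hw; have sz := size_perms hz.
have xE : oneline_comp x (oneline_inv z) = w -> x = oneline_comp w z.
  move=> <-; rewrite -(compA _ hz) ?(size_perms hzi) //.
  by rewrite (comp_invl hz) (comp_idr sx).
apply/eqP/eqP => [/xE ->|zE].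
  by rewrite (compA _ hz) ?(size_perms hwi) // (comp_invl hw) (comp_idl hz).
have -> : x = oneline_comp w z.
  by rewrite zE (compA _ hx) ?(size_perms hwi) // (comp_invr hw) (comp_idl hx).
by rewrite -(compA _ hzi) ?sz // (comp_invr hz) (comp_idr sw).
Qed.

Definition des_in (n : nat) (x : seq nat) (ps : seq nat) : bool :=
  all (fun i => (nth 0 x i < nth 0 x i.-1) ==> (i \in ps)) (iota 1 n.-1).

Lemma des_inP n x ps :
  reflect (forall i, 0 < i -> i < n -> nth 0 x i < nth 0 x i.-1 -> i \in ps)
          (des_in n x ps).
Proof.
apply: (iffP allP) => h i.
  by move=> h1 h2 h3; have := h i; rewrite mem_iota h3 /=; apply; lia.
by rewrite mem_iota => hi; apply/implyP; apply: h; lia.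
Qed.

Lemma eq_des_in n x ps ps' :
  (forall i, 0 < i -> i < n -> (i \in ps) = (i \in ps')) ->
  des_in n x ps = des_in n x ps'.
Proof.
by move=> h; apply/des_inP/des_inP => H i h1 h2 h3; [rewrite -h | rewrite h] => //; apply: H.
Qed.

Lemma des_in_cat n p A B ps : size A = p -> p <= n -> all (fun j => j < p) ps ->
  des_in n (A ++ B) (rcons ps p) = des_in p A ps && des_in (n - p) B [::].
Proof.
move=> hA hpn /allP hps; apply/des_inP/andP.
  move=> H; split; apply/des_inP => i h1 h2 h3.
    have := H i h1 ltac:(lia); rewrite !nth_cat hA.
    have -> : (i < p) = true by lia. have -> : (i.-1 < p) = true by lia.
    move=> /(_ h3); rewrite mem_rcons in_cons => /orP[/eqP|] //; lia.
  have := H (i + p) ltac:(lia) ltac:(lia); rewrite !nth_cat hA.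
  have -> : (i + p < p) = false by lia. have -> : ((i + p).-1 < p) = false by lia.
  have -> : i + p - p = i by lia. have -> : (i + p).-1 - p = i.-1 by lia.
  move=> /(_ h3); rewrite mem_rcons in_cons => /orP[/eqP|]; first lia.
  by move=> /hps; lia.
case=> /des_inP HA /des_inP HB i h1 h2; rewrite !nth_cat hA.
case: (ltngtP i p) => hip.
- have -> : (i.-1 < p) = true by lia.
  by move=> h3; rewrite mem_rcons in_cons; apply/orP; right; apply: HA.
- have -> : (i.-1 < p) = false by lia.
  have -> : i.-1 - p = (i - p).-1 by lia.
  by move=> h3; have := HB (i - p) ltac:(lia) ltac:(lia) h3.
- by move=> _; rewrite hip mem_rcons mem_head.
Qed.

Lemma des_in_nil n x : size x = n -> des_in n x [::] = sorted leq x.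
Proof.
move=> hx; apply/des_inP/(sortedP 0) => H i.
  move=> hi; have := H i.+1 ltac:(lia) ltac:(lia); rewrite /= in_nil => h.
  by rewrite leqNgt; apply/negP => /h.
move=> h1 h2; have := H i.-1 ltac:(lia); have -> : i.-1.+1 = i by lia.
by rewrite in_nil ltnNge => ->.
Qed.

Lemma des_in_nil_perms k x : x \in perms k -> des_in k x [::] = (x == iota 1 k).
Proof.
move=> hx; rewrite des_in_nil ?(size_perms hx) //.
apply/idP/eqP => [hs|->]; last exact: iota_sorted.
by apply: (sorted_eq leq_trans anti_leq hs (iota_sorted _ _)); rewrite -mem_perms.
Qed.

Lemma des_in_map_mono n (f : nat -> nat) (x : seq nat) ps :
  {in x &, forall a b, (f a < f b) = (a < b)} -> n <= size x ->
  des_in n (map f x) ps = des_in n x ps.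
Proof.
move=> hf hn.
have e i : 0 < i -> i < n ->
    (nth 0 (map f x) i < nth 0 (map f x) i.-1) = (nth 0 x i < nth 0 x i.-1).
  move=> h1 h2.
  have s1 : i < size x by apply: leq_trans h2 hn.
  have s2 : i.-1 < size x by apply: leq_trans _ hn; lia.
  by rewrite !(nth_map 0) // hf ?mem_nth.
by apply/des_inP/des_inP => H i h1 h2 h3; apply: H => //; rewrite ?e // -?e.
Qed.

Definition rank (t : seq nat) (x : nat) := (count (fun y => y < x) t).+1.

Lemma stE t : st t = map (rank t) t.
Proof. by []. Qed.

Lemma rank_lt (t : seq nat) (a b : nat) : uniq t -> a \in t -> b \in t -> a < b ->
  rank t a < rank t b.
Proof.
move=> ut ha hb hab; rewrite /rank ltnS.
have := count_predUI (fun y => y < a) (pred1 a) t.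
have -> : count (predI (fun y => y < a) (pred1 a)) t = 0.
  by apply/eqP; rewrite -leqn0 leqNgt -has_count; apply/hasP => -[y _ /= /andP[h /eqP]]; lia.
have -> : count (pred1 a) t = 1 by rewrite count_uniq_mem ?ha.
have : count (predU (fun y => y < a) (pred1 a)) t <= count (fun y => y < b) t.
  by apply: sub_count => y /= /orP[|/eqP]; lia.
lia.
Qed.

Lemma rank_mono t : uniq t -> {in t &, forall a b, (rank t a < rank t b) = (a < b)}.
Proof.
move=> ut a b ha hb; case: (ltngtP a b) => h.
- by rewrite rank_lt.
- by apply/negbTE; rewrite -leqNgt ltnW // rank_lt.
- by rewrite h ltnn.
Qed.

Lemma rank_inj (t : seq nat) : uniq t -> {in t &, injective (rank t)}.
Proof.
move=> ut a b ha hb e; case: (ltngtP a b) => // h.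
  by have := rank_lt ut ha hb h; rewrite e ltnn.
by have := rank_lt ut hb ha h; rewrite e ltnn.
Qed.

Lemma rank_bound (t : seq nat) (a : nat) : a \in t -> 0 < rank t a <= size t.
Proof.
move=> ha; rewrite /rank /=; have := count_predC (fun y => y < a) t.
have : 0 < count (predC (fun y => y < a)) t.
  by rewrite -has_count; apply/hasP; exists a => //=; rewrite ltnn.
lia.
Qed.

Lemma st_map_mono f s : {in s &, forall a b, (f a < f b) = (a < b)} -> st (map f s) = st s.
Proof.
move=> hf; rewrite /st -map_comp; apply/eq_in_map => a ha /=.
by rewrite count_map; congr (_.+1); apply: eq_in_count => y hy /=; exact: hf.
Qed.

Lemma st_perms (t : seq nat) : uniq t -> st t \in perms (size t).
Proof.
move=> ut; have hu : uniq (map (rank t) t) by rewrite map_inj_in_uniq //; apply: rank_inj.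
rewrite mem_perms stE; apply: uniq_perm => //; first exact: iota_uniq.
have hs : {subset map (rank t) t <= iota 1 (size t)}.
  by move=> y /mapP[a ha ->]; rewrite mem_iota; have := rank_bound ha; lia.
by have := uniq_min_size hu hs; rewrite size_map size_iota leqnn => /(_ isT) [].
Qed.

Lemma count_ltn_iota i k : count (fun y => y < i) (iota 1 k) = minn i.-1 k.
Proof.
elim: k => [|k IH]; first by rewrite minn0.
by rewrite -[k.+1]addn1 iotaD count_cat IH /=; lia.
Qed.

Lemma st_perms_id k (x : seq nat) : x \in perms k -> st x = x.
Proof.
move=> hx; rewrite stE; apply: map_id_in => i hi; rewrite /rank.
have hp : perm_eq x (iota 1 k) by rewrite -mem_perms.
by rewrite (permP hp) count_ltn_iota; move: hi; rewrite (perms_memE _ hx); lia.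
Qed.

Lemma cross_perms p q u b : u \in perms p -> b \in perms q -> cross u b \in perms (p + q).
Proof.
move=> hu hb; rewrite mem_perms /cross (size_perms hu) iotaD.
apply: perm_cat; first by rewrite -mem_perms.
by rewrite addnC iotaDl; apply: perm_map; rewrite -mem_perms.
Qed.

Lemma comp_cross x u b : oneline_comp x (cross u b) =
  oneline_comp x u ++ oneline_comp x (map (addn (size u)) b).
Proof. by rewrite /oneline_comp /cross map_cat. Qed.

Lemma cross0s (y : seq nat) : cross [::] y = y.
Proof. by rewrite /cross /= map_id_in. Qed.

Lemma crosss0 (y : seq nat) : cross y [::] = y.
Proof. by rewrite /cross cats0. Qed.

Lemma crossA (x y z : seq nat) : cross x (cross y z) = cross (cross x y) z.
Proof.
rewrite /cross map_cat catA -map_comp size_cat size_map; congr (_ ++ _).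
by apply: eq_map => a /=; rewrite addnA.
Qed.

Lemma foldr_cross_rcons (l : seq (seq nat)) y :
  foldr cross [::] (rcons l y) = cross (foldr cross [::] l) y.
Proof.
elim: l => [|a l IH] /=; first by rewrite cross0s crosss0.
by rewrite IH crossA.
Qed.

Lemma cuts_rcons (s : seq nat) ps p off : path leq off (rcons ps p) ->
  cuts s (rcons ps p) off = cuts (take (p - off) s) ps off ++ [:: drop (p - off) s].
Proof.
elim: ps s off => [|q ps IH] s off //= /andP[hq hp].
have hqp : q <= p.
  by have /allP := order_path_min leq_trans hp; apply; rewrite mem_rcons mem_head.
rewrite IH // take_takel; last lia.
by rewrite drop_drop take_drop; have -> : p - q + (q - off) = p - off by lia.
Qed.

Lemma cuts_map (f : nat -> nat) s ps off :
  cuts (map f s) ps off = map (map f) (cuts s ps off).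
Proof. by elim: ps s off => [|q ps IH] s off //=; rewrite -map_drop IH map_take. Qed.

Lemma cuts_sub (s : seq nat) ps off blk : blk \in cuts s ps off -> {subset blk <= s}.
Proof.
elim: ps s off => [|q ps IH] s off /=; first by rewrite inE => /eqP ->.
rewrite inE => /orP[/eqP ->|/IH h x /h]; [exact: mem_take | exact: mem_drop].
Qed.

Lemma foldr_cross_cuts_perms ps (s : seq nat) off : uniq s ->
  foldr cross [::] (map st (cuts s ps off)) \in perms (size s).
Proof.
elim: ps s off => [|q ps IH] s off us /=; first by rewrite crosss0; apply: st_perms.
rewrite -{3}(cat_take_drop (q - off) s) size_cat.
by apply: cross_perms; [apply: st_perms; rewrite take_uniq | apply: IH; rewrite drop_uniq].
Qed.

(* [v_J] for [J] given as an increasing list of cut positions *)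
Definition vcut (v : seq nat) (ps : seq nat) : seq nat :=
  foldr cross [::] (map st (cuts v ps 0)).

Lemma vcut_nil v : vcut v [::] = st v.
Proof. by rewrite /vcut /= crosss0. Qed.

Lemma vcut_perms v ps : uniq v -> vcut v ps \in perms (size v).
Proof. exact: foldr_cross_cuts_perms. Qed.

Lemma vcut_rcons v ps p : uniq v -> sorted leq (rcons ps p) ->
  vcut v (rcons ps p) = cross (vcut (st (take p v)) ps) (st (drop p v)).
Proof.
move=> uv hp; rewrite /vcut cuts_rcons ?subn0; last by case: (ps) hp.
rewrite map_cat cats1 foldr_cross_rcons; congr (cross (foldr _ _ _) _).
have ut : uniq (take p v) by rewrite take_uniq.
rewrite stE cuts_map -map_comp; apply/eq_in_map => blk hb /=.
by symmetry; apply: st_map_mono => a b ha hb'; apply: rank_mono => //; exact: (cuts_sub hb).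
Qed.

Fixpoint sorted_subsets (k : nat) : seq (seq nat) :=
  if k is k'.+1 then
    sorted_subsets k' ++ map (fun s => rcons s k'.+1) (sorted_subsets k')
  else [:: [::]].

Lemma sorted_rcons_ltn (s : seq nat) x :
  sorted ltn (rcons s x) = sorted ltn s && all (fun y => y < x) s.
Proof. by rewrite !(sorted_pairwise ltn_trans) pairwise_rcons andbC. Qed.

Lemma mem_sorted_subsets k s :
  (s \in sorted_subsets k) = sorted ltn s && all (fun x => 0 < x <= k) s.
Proof.
elim: k s => [|k IH] s.
  case: s => [|a s] //=; rewrite inE /=; apply/esym/negbTE.
  by rewrite negb_and; apply/orP; right; rewrite negb_and; apply/orP; left; lia.
rewrite /= mem_cat IH; apply/orP/andP.
  case=> [/andP[h1 h2]|/mapP[s' hs' ->]].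
    by split=> //; apply: sub_all h2 => y; lia.
  move: hs'; rewrite IH => /andP[h1 h2].
  rewrite sorted_rcons_ltn all_rcons h1 /=.
  by split; [|apply/andP; split; first lia]; apply: sub_all h2 => y; lia.
case=> hs ha; case/lastP: s hs ha => [|s' x] hs ha; first by left.
move: hs ha; rewrite sorted_rcons_ltn all_rcons => /andP[h1 h2] /andP[h3 h4].
have hs' : all (fun y => 0 < y <= k) s'.
  by apply/allP => y hy; have := allP h2 y hy; have := allP h4 y hy; lia.
case: (ltngtP x k.+1) => hx; [left | lia | right].
  by rewrite all_rcons hs' andbT; lia.
by apply/mapP; exists s' => //; rewrite ?hx // IH h1.
Qed.

Lemma uniq_sorted_subsets k : uniq (sorted_subsets k).
Proof.
elim: k => [|k IH] //=; rewrite cat_uniq IH /=; apply/andP; split.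
  by apply/hasPn => s /mapP[s' _ ->]; rewrite mem_sorted_subsets all_rcons; lia.
by rewrite map_inj_uniq // => a b /rcons_inj [->].
Qed.

Definition seq_of_set n (J : {set 'I_n}) : seq nat := sort leq [seq val i | i <- enum J].

Lemma mem_seq_of_set n (J : {set 'I_n}) (i : 'I_n) : (val i \in seq_of_set J) = (i \in J).
Proof. by rewrite mem_sort (mem_map val_inj) mem_enum. Qed.

Lemma seq_of_setP n (J : {set 'I_n}) x :
  x \in seq_of_set J -> exists2 i : 'I_n, i \in J & x = val i.
Proof. by rewrite mem_sort => /mapP[i]; rewrite mem_enum; exists i. Qed.

Lemma sorted_seq_of_set n (J : {set 'I_n}) : sorted ltn (seq_of_set J).
Proof.
rewrite ltn_sorted_uniq_leq sort_uniq (map_inj_uniq val_inj) enum_uniq /=.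
exact: (sort_sorted leq_total).
Qed.

Lemma size_seq_of_set n (J : {set 'I_n}) : size (seq_of_set J) = #|J|.
Proof. by rewrite size_sort size_map cardE. Qed.

Lemma des_sub_des_in n x (J : {set 'I_n}) : des_sub x J = des_in n x (seq_of_set J).
Proof.
apply/forallP/des_inP => [H i h1 h2 h3|H p].
  by move: (H (Ordinal h2)); rewrite -mem_seq_of_set /= h1 h3.
apply/implyP => /andP[h1 h3]; rewrite -mem_seq_of_set; exact: (H p h1 (ltn_ord p) h3).
Qed.

Lemma seq_of_set_subJ n (J : {set 'I_n}) :
  subJ J -> seq_of_set J \in sorted_subsets n.-1.
Proof.
move=> /forallP hJ; rewrite mem_sorted_subsets sorted_seq_of_set /=.
apply/allP => x /seq_of_setP[i hi ->].
by have := hJ i; rewrite hi /= => h; have := ltn_ord i; lia.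
Qed.

Lemma perm_seq_of_set_subJ n :
  perm_eq [seq seq_of_set J | J <- enum [pred J : {set 'I_n} | subJ J]]
          (sorted_subsets n.-1).
Proof.
apply: uniq_perm; last 1 first.
- move=> s; apply/mapP/idP => [[J hJ ->]|hs].
    by apply: seq_of_set_subJ; move: hJ; rewrite mem_enum.
  move: hs; rewrite mem_sorted_subsets => /andP[hs ha].
  exists [set i : 'I_n | val i \in s].
    rewrite mem_enum /=; apply/forallP => i; apply/implyP; rewrite inE => hi.
    by have := allP ha _ hi; lia.
  apply: (irr_sorted_eq ltn_trans ltnn hs (sorted_seq_of_set _)) => x.
  apply/idP/idP => [hx|/seq_of_setP[i hi ->]]; last by move: hi; rewrite inE.
  have hxn : x < n by have := allP ha _ hx; lia.
  by rewrite -[x]/(val (Ordinal hxn)) mem_seq_of_set inE.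
- rewrite map_inj_in_uniq ?enum_uniq // => J1 J2 _ _ eJ.
  by apply/setP => i; rewrite -!mem_seq_of_set eJ.
- exact: uniq_sorted_subsets.
Qed.

Lemma shuffles_des_in n p z : z \in perms n -> p <= n ->
  sorted ltn (take p z) && sorted ltn (drop p z) = des_in n z [:: p].
Proof.
move=> hz hp; have sz := size_perms hz; have uz := perms_uniq hz.
rewrite -{3}(cat_take_drop p z) -[[:: p]]/(rcons [::] p).
rewrite des_in_cat ?size_takel ?sz // !des_in_nil ?size_takel ?size_drop ?sz //.
by rewrite !ltn_sorted_uniq_leq take_uniq // drop_uniq.
Qed.

Lemma count_prodF p q u b w : u \in perms p -> b \in perms q -> w \in perms (p + q) ->
  count_mem w (prodF u b) = des_in (p + q) (oneline_comp (oneline_inv w) (cross u b)) [:: p].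
Proof.
move=> hu hb hw; have hx := cross_perms hu hb.
have hz := comp_perms (inv_perms hw) hx.
rewrite /prodF count_map (size_perms hu) (size_perms hb).
rewrite (@eq_in_count _ _ (pred1 (oneline_comp (oneline_inv w) (cross u b)))); last first.
  by move=> z; rewrite /shuffles mem_filter => /andP[_ hz'] /=; rewrite (comp_inv_eq hx hz' hw).
rewrite count_uniq_mem ?filter_uniq ?uniq_perms //.
by rewrite /shuffles mem_filter hz andbT (shuffles_des_in hz) // leq_addr.
Qed.

Lemma count_prodF_notin p q u b w : u \in perms p -> b \in perms q ->
  w \notin perms (p + q) -> count_mem w (prodF u b) = 0.
Proof.
move=> hu hb hw; apply/count_memPn; apply: contra hw => /mapP[z hz ->].
move: hz; rewrite /shuffles mem_filter (size_perms hu) (size_perms hb) => /andP[_ hz].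
exact: comp_perms (cross_perms hu hb) (inv_perms hz).
Qed.

Lemma des_in_st_take n p (x c : seq nat) ps : p <= n -> x \in perms n -> c \in perms p ->
  des_in p (oneline_comp x c) ps = des_in p (oneline_comp (st (take p x)) c) ps.
Proof.
move=> hp hx hc; set t := take p x.
have st_ : size t = p by rewrite size_takel // (size_perms hx).
have ut : uniq t by rewrite take_uniq // (perms_uniq hx).
have hlt i : i \in c -> i.-1 < p by rewrite (perms_memE _ hc); lia.
have memt i : i \in c -> nth 0 x i.-1 \in t.
  by move=> hi; rewrite -(nth_take 0 (hlt i hi)) mem_nth ?st_ ?hlt.
have -> : oneline_comp (st t) c = map (rank t) (oneline_comp x c).
  rewrite /oneline_comp stE -map_comp; apply/eq_in_map => i hi /=.
  by rewrite (nth_map 0) ?st_ ?hlt // nth_take ?hlt.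
rewrite des_in_map_mono ?size_map ?(size_perms hc) //.
by move=> _ _ /mapP[i hi ->] /mapP[j hj ->]; apply: rank_mono; rewrite ?memt.
Qed.

Local Open Scope ring_scope.

Lemma sum_mul_eq (T : eqType) (s : seq T) (F : T -> rat) y : uniq s -> y \in s ->
  \sum_(u <- s) F u * (u == y)%:R = F y.
Proof.
move=> us ys; rewrite (bigD1_seq y) //= eqxx mulr1 big1 ?addr0 //.
by move=> u /negPf ->; rewrite mulr0.
Qed.

(* Asking [x (u \times b)] to have no descent before [p] forces
   [st(x_1 .. x_p) u = id], so a single [u] survives on the left. *)
Lemma sum_des_in_cross p q (x c b : seq nat) s : x \in perms (p + q)%N -> c \in perms p ->
  b \in perms q -> all (fun i => (i < p)%N) s ->
  \sum_(u <- perms p) (des_in p (oneline_comp (oneline_inv u) c) s)%:R *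
                      (des_in (p + q) (oneline_comp x (cross u b)) [:: p])%:R
  = (des_in (p + q) (oneline_comp x (cross c b)) (rcons s p))%:R :> rat.
Proof.
move=> hx hc hb hs; have hpn := leq_addr q p.
have des_cross y : y \in perms p -> forall ps, all (fun i => (i < p)%N) ps ->
    des_in (p + q)%N (oneline_comp x (cross y b)) (rcons ps p) =
    des_in p (oneline_comp x y) ps &&
    des_in q (oneline_comp x (map (addn p) b)) [::].
  move=> hy ps hps; rewrite comp_cross (size_perms hy) des_in_cat ?addKn //.
  by rewrite size_map (size_perms hy).
rewrite des_cross //; under eq_big_seq => u hu do rewrite -[[:: p]]/(rcons [::] p) des_cross //.
case: (des_in q _ _); last by rewrite andbF big1_seq // => u _; rewrite andbF mulr0.
set tau := st (take p x).
have htau : tau \in perms p.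
  by have := st_perms (take_uniq p (perms_uniq hx)); rewrite size_takel ?(size_perms hx).
under eq_big_seq => u hu.
  rewrite andbT (des_in_st_take _ hpn hx hu) des_in_nil_perms ?comp_perms //.
  rewrite (comp_eq_id htau hu); over.
by rewrite sum_mul_eq ?uniq_perms ?inv_perms // (invK htau) andbT (des_in_st_take _ hpn hx hc).
Qed.

Lemma mulrF_eq (x y : Elt) b w : x =1 y -> mulrF x b w = mulrF y b w.
Proof. by move=> e; rewrite /mulrF; case: ifP => // _; apply: eq_bigr => u _; rewrite e. Qed.

Lemma mulrF_notin (x : Elt) b w p q : b \in perms q ->
  (forall u, x u != 0 -> u \in perms p) -> w \notin perms (p + q) -> mulrF x b w = 0.
Proof.
move=> hb hx hw; rewrite /mulrF; case: ifP => // _; apply: big1_seq => u /andP[_ hu].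
have [->|/hx hu'] := eqVneq (x u) 0; first by rewrite mul0r.
by rewrite (count_prodF_notin hu' hb hw) mulr0.
Qed.

Lemma mulrF_nil (x : Elt) w : (forall w, x w != 0 -> is_perm w) -> mulrF x [::] w = x w.
Proof.
move=> hx; rewrite /mulrF /= subn0; set k := size w.
have hc u : u \in perms k -> count_mem w (prodF u [::]) = (u == w) :> nat.
  move=> hu; have hb : [::] \in perms 0 by [].
  case hw : (w \in perms k); last first.
    rewrite (@count_prodF_notin k 0) ?addn0 ?hw //.
    by have /negPf -> : u != w by apply: contraFN hw => /eqP <-.
  rewrite (@count_prodF k 0) ?addn0 // crosss0 (@eq_des_in _ _ _ [::]); last first.
    by move=> i _ h; rewrite !inE; apply/negbTE; rewrite neq_ltn h.
  by rewrite des_in_nil_perms ?comp_perms ?inv_perms // comp_eq_id ?inv_perms // (invK hw).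
under eq_big_seq => u hu do rewrite hc //.
case hw : (w \in perms k); first by rewrite sum_mul_eq // uniq_perms.
have -> : x w = 0 by apply/eqP; apply: contraFT hw => /hx; rewrite is_permE.
rewrite big1_seq // => u /andP[_ hu].
have /negPf -> : u != w by apply: contraFN hw => /eqP <-.
by rewrite mulr0.
Qed.

Lemma sum_sorted_subsets k (h : seq nat -> rat) :
  \sum_(s <- sorted_subsets k) h s =
  h [::] + \sum_(p < k) \sum_(s <- sorted_subsets p) h (rcons s p.+1).
Proof.
elim: k => [|k IH]; first by rewrite /= big_seq1 big_ord0 addr0.
by rewrite /= big_cat big_map IH big_ord_recr /= addrA.
Qed.

Lemma sum_subJ n (F : seq nat -> rat) :
  \sum_(J : {set 'I_n} | subJ J) F (seq_of_set J) = \sum_(s <- sorted_subsets n.-1) F s.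
Proof. by rewrite -(perm_big _ (perm_seq_of_set_subJ n)) big_map big_enum. Qed.

(* The summand of [lambda v w] indexed by [J = s]. *)
Definition lambda_term (v w s : seq nat) : rat :=
  (-1) ^+ (size s).+1 *
  (des_in (size v) (oneline_comp (oneline_inv w) (vcut v s)) s)%:R.

Lemma lambda_sum v w :
  (lambda v w)%:~R = \sum_(s <- sorted_subsets (size v).-1) lambda_term v w s.
Proof.
have cardE (A : {set {set 'I_(size v)}}) : (#|A|%:Z)%:~R = \sum_(J in A) 1 :> rat.
  by rewrite sumr_const.
rewrite -sum_subJ /lambda rmorphB /= !cardE.
rewrite (big_mkcond (fun J => J \in _)) [X in _ - X](big_mkcond (fun J => J \in _)) -sumrB.
rewrite (bigID (fun J => subJ J)) /= [X in _ + X]big1 ?addr0; last first.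
  by move=> J /negPf hJ; rewrite !inE /goodJ hJ subrr.
apply: eq_bigr => J hJ; rewrite !inE /goodJ hJ /= /lambda_term.
rewrite des_sub_des_in /vJ -/(seq_of_set J) -/(vcut v (seq_of_set J)) size_seq_of_set.
case: (des_in _ _ _); last by rewrite subrr mulr0.
by rewrite mulr1 -signr_odd /=; case: (odd #|J|); rewrite /= ?subr0 ?sub0r ?expr1 ?expr0 ?opprK.
Qed.

Definition lambdaF (v : seq nat) : Elt := fun w =>
  if is_perm w && (size w == size v) then (lambda v w)%:~R else 0.

Lemma lambdaF_supp v w : lambdaF v w != 0 -> w \in perms (size v).
Proof.
by rewrite /lambdaF; case: ifP => [/andP[+ /eqP <-] _|_]; rewrite -?is_permE ?eqxx.
Qed.

Lemma mulrF_lambdaF p q a b w : a \in perms p.+1 -> b \in perms q ->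
  w \in perms (p.+1 + q) ->
  mulrF (lambdaF a) b w = \sum_(s <- sorted_subsets p) (-1) ^+ (size s).+1 *
    (des_in (p.+1 + q) (oneline_comp (oneline_inv w) (cross (vcut a s) b)) (rcons s p.+1))%:R.
Proof.
move=> ha hb hw; rewrite /mulrF (size_perms hb) (size_perms hw) leq_addl addnK.
under eq_big_seq => u hu.
  rewrite (count_prodF hu hb hw) /lambdaF is_permE !(size_perms hu) (size_perms ha) hu.
  by rewrite eqxx lambda_sum (size_perms ha) mulr_suml; over.
rewrite exchange_big /=; apply: eq_big_seq => s.
rewrite mem_sorted_subsets => /andP[_ /allP hs].
under eq_bigr do rewrite /lambda_term (size_perms ha) -mulrA.
rewrite -mulr_sumr sum_des_in_cross ?comp_perms ?inv_perms //.
- by rewrite -(size_perms ha) vcut_perms ?(perms_uniq ha).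
- by apply/allP => i /hs; lia.
Qed.

Lemma mulrF_basis_nil n v w : v \in perms n -> w \in perms n ->
  mulrF (basisF [::]) v w = (v == w)%:R.
Proof.
move=> hv hw; have hw0 : w \in perms (0 + n) by rewrite add0n.
rewrite /mulrF (size_perms hw) (size_perms hv) leqnn subnn big_seq1 /basisF eqxx mul1r.
rewrite (count_prodF _ hv hw0) // cross0s add0n (@eq_des_in _ _ _ [::]); last first.
  by move=> i hi _; rewrite !inE; apply/negbTE; rewrite -lt0n.
by rewrite des_in_nil_perms ?comp_perms ?inv_perms // comp_eq_id ?inv_perms // (invK hw).
Qed.

Lemma lambda_term_nil n v w : v \in perms n -> w \in perms n ->
  lambda_term v w [::] = - (v == w)%:R.
Proof.
move=> hv hw; rewrite /lambda_term vcut_nil (st_perms_id hv) (size_perms hv) expr1 mulN1r.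
by rewrite des_in_nil_perms ?comp_perms ?inv_perms // comp_eq_id ?inv_perms // (invK hw).
Qed.

Lemma mulrF_lambdaF_cut n p v w : v \in perms n -> w \in perms n -> (p < n)%N ->
  mulrF (lambdaF (st (take p.+1 v))) (st (drop p.+1 v)) w =
  - \sum_(s <- sorted_subsets p) lambda_term v w (rcons s p.+1).
Proof.
move=> hv hw hpn; have uv := perms_uniq hv; have sv := size_perms hv.
have ha : st (take p.+1 v) \in perms p.+1.
  by have := st_perms (take_uniq p.+1 uv); rewrite size_takel ?sv.
have hb : st (drop p.+1 v) \in perms (n - p.+1).
  by have := st_perms (drop_uniq p.+1 uv); rewrite size_drop sv.
have hw' : w \in perms (p.+1 + (n - p.+1)) by rewrite subnKC.
rewrite (mulrF_lambdaF ha hb hw') subnKC // -sumrN.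
apply: eq_big_seq => s; rewrite mem_sorted_subsets => /andP[hs hsp].
rewrite /lambda_term sv size_rcons [(-1) ^+ (size s).+2]exprS mulN1r mulNr opprK.
rewrite vcut_rcons //; apply: (sub_sorted (e := ltn)) => [x y /ltnW //|].
by rewrite sorted_rcons_ltn hs; apply: sub_all hsp => x; lia.
Qed.

(* [lambdaF] obeys the recursion that the left antipode axiom imposes on [S]. *)
Lemma lambdaF_rec v w : is_perm v -> (0 < size v)%N ->
  lambdaF v w = - (mulrF (basisF [::]) v w +
    \sum_(p < (size v).-1) mulrF (lambdaF (st (take p.+1 v))) (st (drop p.+1 v)) w).
Proof.
rewrite is_permE => hv hn.
case hw : (w \in perms (size v)); last first.
  have wn p : (p <= size v)%N -> w \notin perms (p + (size v - p)).
    by move=> hp; rewrite subnKC //; apply: negbT.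
  have -> : lambdaF v w = 0 by apply/eqP; apply: contraFT hw => /lambdaF_supp.
  rewrite big1 => [|[p hp] _].
    rewrite (mulrF_notin (p := 0) (q := size v - 0)) ?wn ?subn0 ?addr0 ?oppr0 // => u.
    by rewrite /basisF; case: (u =P [::]) => [-> //|]; rewrite eqxx.
  apply: (mulrF_notin (p := p.+1)) (wn _ _); last by lia.
    by have := st_perms (drop_uniq p.+1 (perms_uniq hv)); rewrite size_drop.
  by move=> u /lambdaF_supp; rewrite size_map size_takel /=; lia.
have -> : lambdaF v w = (lambda v w)%:~R.
  by rewrite /lambdaF is_permE (size_perms hw) hw eqxx.
rewrite lambda_sum sum_sorted_subsets (mulrF_basis_nil hv hw) (lambda_term_nil hv hw).
rewrite opprD -sumrN; congr (_ + _); apply: eq_bigr => -[p hp] _.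
by rewrite (mulrF_lambdaF_cut hv hw) ?opprK //=; lia.
Qed.

Section Antipode.

Variable S : seq nat -> Elt.
Hypothesis HS : is_antipode S.

Lemma antipode_nil : S [::] =1 basisF [::].
Proof.
move=> w; have := HS.2.1 [::] isT w.
by rewrite big_ord_recr big_ord0 /= add0r mul1r mulrF_nil //; exact: (HS.1 [::]).1.
Qed.

Lemma antipode_rec v w : is_perm v -> (0 < size v)%N ->
  S v w = - \sum_(p < size v) mulrF (S (st (take p v))) (st (drop p v)) w.
Proof.
move=> hv hn; have hvP : v \in perms (size v) by rewrite -is_permE.
have := HS.2.1 v hv w; rewrite big_ord_recr /= take_size drop_size (st_perms_id hvP).
rewrite mulrF_nil; last exact: (HS.1 v).1.
by rewrite (negPf (lt0n_neq0 hn)) mul0r addrC => /eqP; rewrite addr_eq0 => /eqP.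
Qed.

Lemma antipodeE v : is_perm v -> (0 < size v)%N -> S v =1 lambdaF v.
Proof.
have [m] := ubnP (size v); elim: m v => // m IH v /ltnSE hvm hv hn w.
have [k sk] : exists k, size v = k.+1 by exists (size v).-1; lia.
have hvP : v \in perms (size v) by rewrite -is_permE.
rewrite (antipode_rec w hv hn) (lambdaF_rec w hv hn) sk big_ord_recl take0 drop0.
rewrite (mulrF_eq _ _ antipode_nil) (st_perms_id hvP); congr (- (_ + _)).
apply: eq_bigr => p _; rewrite lift0; apply: mulrF_eq.
have ha : st (take p.+1 v) \in perms p.+1.
  by have := st_perms (take_uniq p.+1 (perms_uniq hvP)); rewrite size_takel // sk ltnS ltnW.
by apply: IH; rewrite ?is_permE (size_perms ha) //; have := ltn_ord p; lia.
Qed.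

End Antipode.

Unset Implicit Arguments. Set Strict Implicit.

Theorem mainTheorem8 (S : seq nat -> Elt) (HS : is_antipode S)
  (v : seq nat) (hv : is_perm v) (hn : (1 <= size v)%N) (w : seq nat) :
  S v w = if is_perm w && (size w == size v) then (lambda v w)%:~R else 0.
Proof. exact: antipodeE. Qed.
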